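(* Let $T$ be a non-periodic transformation of a Lebesgue probability space $(\Omega,\mu)$. Then there exist a measurable function $f:\Omega\to\{0,1,2,\dots\}$ and a function $g:\{0,1,2,\dots\}\to\{0,1,2,\dots\}$ such that (almost everywhere) (1) $|f(T(\omega))-f(\omega)|\le 1$ for all $\omega$; (2) for all $\omega$ and all nonnegative integers $i$, there is a point in $\{T(\omega),T^2(\omega),\dots,T^{g(i)}(\omega)\}$ at which $f$ takes a value greater than $i$.
   Context: A non-periodic transformation is a one-to-one measure preserving transformation $T$ with $\mu(\{\omega: T^i(\omega)=\omega\text{ for some } i\ge1\})=0$. *)

From HB Require Import structures.
From mathcomp Require Import all_boot all_order all_algebra.
From mathcomp Require Import all_classical all_reals all_analysis.
Set Implicit Arguments. Unset Strict Implicit. Unset Printing Implicit Defensive.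
Import Order.TTheory GRing.Theory Num.Theory.
Local Open Scope classical_set_scope.
Local Open Scope ring_scope.

(* A Lebesgue (standard) probability space: (Om, mu) is isomorphic mod 0
   to a Borel probability space (R, nu) on the real line (equivalently, to a
   Borel probability on a Polish space). *)
Definition lebesgue_probability_space d (Om : measurableType d) (R : realType)
    (mu : probability Om R) : Prop :=
  exists (Om0 : set Om) (B : set (measurableTypeR R))
         (phi : Om -> measurableTypeR R)
         (nu : probability (measurableTypeR R) R),
    [/\ measurable Om0, mu Om0 = 1%E, measurable B & nu B = 1%E] /\
    [/\ set_bij Om0 B phi,
        (forall A, measurable A -> measurable (Om0 `&` phi @^-1` A)),
        (forall A, measurable A -> A `<=` Om0 -> measurable (phi @` A))
      & (forall A, measurable A -> A `<=` Om0 -> mu A = nu (phi @` A))].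

Definition measure_preserving_injective d (Om : measurableType d) (R : realType)
    (mu : probability Om R) (T : Om -> Om) : Prop :=
  [/\ injective T, measurable_fun setT T
    & forall A, measurable A -> mu (T @^-1` A) = mu A].

Definition non_periodic d (Om : measurableType d) (R : realType)
    (mu : probability Om R) (T : Om -> Om) : Prop :=
  measure_preserving_injective mu T /\
  mu.-negligible [set w | exists i : nat, (0 < i)%N /\ iter i T w = w].

From HB Require Import structures.
From mathcomp Require Import all_boot all_order all_algebra.
From mathcomp Require Import all_classical all_reals all_analysis.
From mathcomp Require Import zify lra.
Import Order.TTheory GRing.Theory Num.Theory.

(* Off a null set no orbit is periodic and every point stays in the standard part
   of the space, so pulling back rational intervals gives a countable measurable
   family that separates any such point from its first n iterates.  From it one
   builds, for every e > 0, a marker set of measure at most e visited by every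
   orbit in each window of some bounded length L: colour a point by the first
   member of the family that it leaves for c steps and mark the points whose
   colour c steps later is maximal over a window of length 2c.  Marked points
   with a genuine colour are more than c steps apart, so their measure is at
   most 1/(c+1), while the uncoloured points have small measure once enough
   colours are used.  Take markers A_k of measure at most 2^-(k+1)/(2k+1) and
   let f be the supremum over k of the tents of height k placed on the visits to
   A_k during the next 2k steps.  Every tent is 1-Lipschitz along orbits,
   Borel-Cantelli makes almost all tents vanish on almost every orbit, and a
   visit to A_(i+1) within L_(i+1) steps forces f > i. *)

Set Implicit Arguments.
Unset Strict Implicit.
Unset Printing Implicit Defensive.
Local Open Scope classical_set_scope.

Lemma measurable_fun_nat d (Om : measurableType d) (h : Om -> nat) :
  (forall v, measurable (h @^-1` [set v])) -> measurable_fun setT h.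
Proof.
move=> mh _ B _; rewrite setTI.
have -> : h @^-1` B = \bigcup_(v in B) h @^-1` [set v].
  apply/seteqP; split => [x Bx|x [v Bv hv]]; first by exists (h x).
  by rewrite /preimage /= hv.
exact: bigcup_measurable.
Qed.

Lemma measurable_fun_nat_le d (Om : measurableType d) (h : Om -> nat) :
  (forall v, measurable [set w | (h w <= v)%N]) -> measurable_fun setT h.
Proof.
move=> mh; apply: measurable_fun_nat => -[|v].
  by have -> : h @^-1` [set 0%N] = [set w | (h w <= 0)%N]
    by apply/seteqP; split => x /=; lia.
have -> : h @^-1` [set v.+1] = [set w | (h w <= v.+1)%N] `\` [set w | (h w <= v)%N].
  by apply/seteqP; split => x /=; lia.
exact: measurableD.
Qed.

Section first_index.
Context d (Om : measurableType d) (U : nat -> set Om) (K : nat).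

Definition first_index x := find (fun j => `[< U j x >]) (iota 0 K.+1).

Definition uncovered := [set x | forall j, (j <= K)%N -> ~ U j x].

Lemma first_index_le x : (first_index x <= K.+1)%N.
Proof. by rewrite /first_index -[X in (_ <= X)%N](size_iota 0 K.+1) find_size. Qed.

Lemma first_index_mem x : (first_index x <= K)%N -> U (first_index x) x.
Proof.
move=> h; have hs : (first_index x < size (iota 0 K.+1))%N by rewrite size_iota.
have := nth_find 0%N (etrans (has_find _ _) hs).
by rewrite nth_iota // => /asboolP.
Qed.

Lemma first_index_min x j : (j <= K)%N -> U j x -> (first_index x <= j)%N.
Proof.
move=> hj hU; rewrite leqNgt; apply/negP => hlt.
have := before_find 0%N hlt; rewrite nth_iota ?add0n; last by lia.
by move/negbT/negP; apply; apply/asboolP.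
Qed.

Lemma first_index_uncovered x :
  (first_index x <= K)%N \/ uncovered x.
Proof.
have [h|h] := leqP (first_index x) K; first by left.
by right => j hj /(first_index_min hj); lia.
Qed.

Hypothesis mU : forall j, measurable (U j).

Lemma measurable_uncovered : measurable uncovered.
Proof.
have -> : uncovered = \bigcap_(j in [set j | (j <= K)%N]) ~` U j by [].
by apply: bigcap_measurableType => j _; exact: measurableC.
Qed.

Lemma measurable_first_index : measurable_fun setT first_index.
Proof.
apply: measurable_fun_nat_le => v.
have -> : [set x | (first_index x <= v)%N] =
    [set x | (K < v)%N] `|` \bigcup_(j in [set j | (j <= minn v K)%N]) U j.
  apply/seteqP; split => x /=.
    move=> hv; have [hK|hK] := leqP (first_index x) K; last by left; lia.
    by right; exists (first_index x); [rewrite /= leq_min hv|exact: first_index_mem].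
  case=> [hK|[j /= hj /(first_index_min _)]]; first by have := first_index_le x; lia.
  by move: hj; rewrite leq_min => /andP[hjv hjK] /(_ hjK); lia.
apply: measurableU; last by apply: bigcup_measurable.
by have [hK|hK] := boolP (K < v)%N; [rewrite (_ : [set _ | _] = setT)|
  rewrite (_ : [set _ | _] = set0)] => //; apply/seteqP; split => x //=; rewrite (negbTE hK).
Qed.

End first_index.

(* Each failed window moves to a position whose centre has a larger value,
   which can happen at most [K.+1] times. *)
Lemma exists_window_max (c K : nat) (u : nat -> nat) :
  (forall p, u p <= K.+1)%N ->
  forall t q0, (K.+1 - u (q0 + c) <= t)%N -> (t * c <= q0)%N ->
  exists q, [/\ (q0 <= q + t * c)%N, (q <= q0 + t * c)%N &
     forall m, (m <= c.*2)%N -> (u (q + m) <= u (q + c))%N].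
Proof.
move=> uK; elim=> [|t IH] q0 Ht Hq.
  exists q0; split; rewrite ?mul0n ?addn0 // => m _.
  by have := uK (q0 + m); have := uK (q0 + c); lia.
have [Hmax|Hnot] :=
  pselect (forall m, (m <= c.*2)%N -> (u (q0 + m) <= u (q0 + c))%N).
  by exists q0; split => //; lia.
have [m [Hm Hlt]] : exists m, (m <= c.*2)%N /\ (u (q0 + c) < u (q0 + m))%N.
  apply: contrapT => Hn; apply: Hnot => m Hm; rewrite leqNgt; apply/negP => Hlt.
  by apply: Hn; exists m.
have Hq1 : (c <= q0 + m)%N by rewrite mulSn in Hq; lia.
have := IH (q0 + m - c)%N; rewrite subnK //.
have := uK (q0 + m); rewrite mulSn in Hq *.
move=> h1 /(_ ltac:(lia) ltac:(lia)) [q [h2 h3 h4]].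
by exists q; split => //; lia.
Qed.

Section iterates.
Context d (Om : measurableType d) (R : realType) (mu : probability Om R).
Context (T : Om -> Om).
Hypothesis mT : measurable_fun setT T.

Lemma measurable_iter m : measurable_fun setT (iter m T).
Proof.
elim: m => [|m IH] /=; first exact: measurable_id.
exact: measurableT_comp.
Qed.

Lemma measurable_preimage_iter m B : measurable B -> measurable (iter m T @^-1` B).
Proof. by move=> mB; rewrite -[_ @^-1` _]setTI; apply: measurable_iter. Qed.

Hypothesis Tpres : forall A, measurable A -> mu (T @^-1` A) = mu A.

Lemma measure_preimage_iter m B : measurable B -> mu (iter m T @^-1` B) = mu B.
Proof.
elim: m B => [|m IH] B mB //=.
rewrite (_ : (fun x => T (iter m T x)) @^-1` B = iter m T @^-1` (T @^-1` B)) //.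
by rewrite IH ?Tpres // -[_ @^-1` _]setTI; apply: mT.
Qed.

End iterates.

Lemma probability_le_invSn d (Om : measurableType d) (R : realType)
    (mu : probability Om R) (n : nat) (A : set Om) : measurable A ->
  (\sum_(i < n.+1) mu A <= 1)%E -> (mu A <= (n.+1%:R^-1)%:E)%E.
Proof.
move=> mA; rewrite -(fineK (fin_num_measure mu A mA)).
rewrite sumEFin sumr_const card_ord !lee_fin => h.
by rewrite -div1r ler_pdivlMr // mulr_natr.
Qed.

Section colour_peaks.
Context d (Om : measurableType d) (R : realType) (mu : probability Om R).
Context (T : Om -> Om) (c : nat) (U : nat -> set Om) (K : nat).

Local Notation colour := (first_index U K).

Definition colour_peak := [set x | forall m, (m <= c.*2)%N ->
   (colour (iter m T x) <= colour (iter c T x))%N].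

Lemma colour_peak_syndetic w s : exists t,
  [/\ (s < t)%N, (t <= s + (K.+1 * c).*2.+1)%N & colour_peak (iter t T w)].
Proof.
have [q [h1 h2 h3]] := @exists_window_max c K (fun p => colour (iter p T w))
  (fun p => first_index_le _ _ _) K.+1 (s.+1 + K.+1 * c) (leq_subr _ _) (leq_addl _ _).
exists q; split; try lia.
by move=> m hm; rewrite -!iterD addnC (addnC c); exact: h3.
Qed.

Definition coloured_peak := colour_peak `&` [set x | (colour (iter c T x) <= K)%N].

Hypothesis discU : forall j x m, (0 < m <= c)%N -> U j x -> ~ U j (iter m T x).

Lemma coloured_peak_iter_disjoint w i j : (i < j <= c)%N ->
  coloured_peak (iter i T w) -> ~ coloured_peak (iter j T w).
Proof.
move=> hij [hA hK] [hA' hK'].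
set x := iter i T w in hA hK.
have hj : iter j T w = iter (j - i) T x by rewrite /x -iterD subnK //; lia.
rewrite hj in hA' hK'; set m := (j - i)%N in hA' hK' hj.
have hm : (0 < m <= c)%N by rewrite /m; lia.
have e1 : (colour (iter (c + m) T x) <= colour (iter c T x))%N by apply: hA; lia.
have e2 : (colour (iter c T x) <= colour (iter (c + m) T x))%N.
  have := hA' (c - m)%N ltac:(lia).
  by rewrite -!iterD subnK; [rewrite addnC|lia].
have e3 : colour (iter (c + m) T x) = colour (iter c T x).
  by apply/eqP; rewrite eqn_leq e1 e2.
apply: (discU hm (first_index_mem hK)).
by rewrite -iterD addnC -e3; apply: first_index_mem; rewrite e3.
Qed.

Hypothesis mT : measurable_fun setT T.
Hypothesis Tpres : forall A, measurable A -> mu (T @^-1` A) = mu A.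
Hypothesis mU : forall j, measurable (U j).

Let measurable_colour_iter m (B : set nat) :
  measurable ((colour \o iter m T) @^-1` B).
Proof.
rewrite -[_ @^-1` _]setTI.
have := measurableT_comp (measurable_first_index K mU) (measurable_iter mT m).
by apply.
Qed.

Lemma measurable_colour_peak : measurable colour_peak.
Proof.
have -> : colour_peak = \bigcup_(v in [set: nat])
   ((colour \o iter c T) @^-1` [set v] `&`
    \bigcap_(m in [set m | (m <= c.*2)%N])
        ((colour \o iter m T) @^-1` [set u | (u <= v)%N])).
  apply/seteqP; split => x /=.
    by move=> hx; exists (colour (iter c T x)) => //; split => // m hm; exact: hx.
  by move=> [v _ [/= hv hm]] m hm'; rewrite hv; exact: hm.
apply: bigcup_measurable => v _; apply: measurableI => //.
by apply: bigcap_measurableType.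
Qed.

Lemma measurable_coloured_peak : measurable coloured_peak.
Proof.
apply: measurableI; first exact: measurable_colour_peak.
exact: (measurable_colour_iter c [set u | (u <= K)%N]).
Qed.

Lemma measure_coloured_peak : (mu coloured_peak <= (c.+1%:R^-1)%:E)%E.
Proof.
apply: probability_le_invSn measurable_coloured_peak _.
pose F (i : 'I_c.+1) := iter i T @^-1` coloured_peak.
have mF i : measurable (F i) by exact: measurable_preimage_iter measurable_coloured_peak.
have tF : trivIset setT F.
  move=> i j _ _ [w [hi hj]].
  have := ltn_ord i; have := ltn_ord j.
  case: (ltngtP i j) => h hj' hi'; last exact: val_inj.
  - by exfalso; apply: (coloured_peak_iter_disjoint _ hi hj); lia.
  - by exfalso; apply: (coloured_peak_iter_disjoint _ hj hi); lia.
have <- : (\sum_(i < c.+1) mu (F i) = \sum_(i < c.+1) mu coloured_peak)%E.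
  by apply: eq_bigr => i _; rewrite measure_preimage_iter //; exact: measurable_coloured_peak.
rewrite -(measure_bigsetU_ord mu xpredT mF tF).
by apply: probability_le1; apply: bigsetU_measurable.
Qed.

Lemma measure_colour_peak :
  (mu colour_peak <= (c.+1%:R^-1)%:E + mu (uncovered U K))%E.
Proof.
have mB := measurable_uncovered K mU.
have mB' := measurable_preimage_iter mT c mB.
rewrite -(measure_preimage_iter mT Tpres c mB).
apply: (@le_trans _ _ (mu (coloured_peak `|` iter c T @^-1` uncovered U K))).
  apply: le_measure; rewrite ?inE; first exact: measurable_colour_peak.
    exact: measurableU measurable_coloured_peak mB'.
  by move=> x hx; have [h|h] := first_index_uncovered U K (iter c T x); [left|right].
apply: le_trans (measureU2 mu measurable_coloured_peak mB') _.
exact: leeD measure_coloured_peak _.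
Qed.

End colour_peaks.

Section tents.
Context (Om : Type) (T : Om -> Om) (A : nat -> set Om).

Definition tent k j := minn j (k.*2 - j).

Definition bump k w :=
  \max_(j < (k.*2).+1 | `[< A k (iter j T w) >]) tent k j.

Definition bump_max M w := \max_(k < M) bump k w.

Definition bumps_bounded w := exists v, forall M, (bump_max M w <= v)%N.

Let bumps_bounded_ex w :
  bumps_bounded w -> exists v, `[< forall M, (bump_max M w <= v)%N >].
Proof. by case=> v hv; exists v; apply/asboolP. Qed.

(* The supremum of all bumps, with junk value 0 on unbounded orbits. *)
Definition bump_sup w :=
  if pselect (bumps_bounded w) is left H then ex_minn (bumps_bounded_ex H) else 0%N.

Lemma bump_supP w : bumps_bounded w ->
  forall v, (bump_sup w <= v)%N <-> (forall M, (bump_max M w <= v)%N).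
Proof.
move=> hb v; rewrite /bump_sup; case: (pselect _) => // H.
case: ex_minnP => m /asboolP hm hmin; split.
  by move=> hv M; exact: leq_trans (hm M) hv.
by move=> hv; apply: hmin; apply/asboolP.
Qed.

Lemma bump_max_le_sup w M : bumps_bounded w -> (bump_max M w <= bump_sup w)%N.
Proof. by move=> hb; move/(bump_supP hb): (leqnn (bump_sup w)). Qed.

Lemma bump_le_bumpT k w : (bump k w <= (bump k (T w)).+1)%N.
Proof.
apply/bigmax_leqP => j /asboolP hj.
case: (posnP j) => [->|jp]; first by rewrite /tent min0n.
have hj' : (j.-1 < (k.*2).+1)%N by have := ltn_ord j; lia.
apply: (@leq_trans (tent k (Ordinal hj')).+1); first by rewrite /tent /=; lia.
rewrite ltnS; apply: (leq_bigmax_cond (Ordinal hj')) => /=.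
by apply/asboolP; rewrite -iterSr prednK.
Qed.

Lemma bumpT_le_bump k w : (bump k (T w) <= (bump k w).+1)%N.
Proof.
apply/bigmax_leqP => j /asboolP hj.
have := ltn_ord j; rewrite ltnS leq_eqVlt => /orP [/eqP ->|jlt].
  by rewrite /tent subnn minn0.
have hj' : (j.+1 < (k.*2).+1)%N by lia.
apply: (@leq_trans (tent k (Ordinal hj')).+1); first by rewrite /tent /=; lia.
rewrite ltnS; apply: (leq_bigmax_cond (Ordinal hj')) => /=.
by apply/asboolP; move: hj; rewrite -iterSr.
Qed.

Lemma bump_sup_lipschitz w : bumps_bounded w -> bumps_bounded (T w) ->
  (bump_sup (T w) <= (bump_sup w).+1)%N /\ (bump_sup w <= (bump_sup (T w)).+1)%N.
Proof.
move=> hw hTw; split.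
- apply/(bump_supP hTw) => M; apply/bigmax_leqP => k _.
  apply: leq_trans (bumpT_le_bump k w) _; rewrite ltnS.
  exact: leq_trans (leq_bigmax k) (bump_max_le_sup M hw).
- apply/(bump_supP hw) => M; apply/bigmax_leqP => k _.
  apply: leq_trans (bump_le_bumpT k w) _; rewrite ltnS.
  exact: leq_trans (leq_bigmax k) (bump_max_le_sup M hTw).
Qed.

Lemma bump_sup_ge w k : bumps_bounded w -> A k (iter k T w) -> (k <= bump_sup w)%N.
Proof.
move=> hb hA; apply: leq_trans (bump_max_le_sup k.+1 hb).
apply: leq_trans (leq_bigmax (Ordinal (ltnSn k))).
have hk : (k < (k.*2).+1)%N by lia.
apply: (@leq_trans (tent k (Ordinal hk))); first by rewrite /tent /=; lia.
by apply: (leq_bigmax_cond (Ordinal hk)); apply/asboolP.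
Qed.

Lemma bump_eq0 k w :
  (forall j, (0 < j < k.*2)%N -> ~ A k (iter j T w)) -> bump k w = 0%N.
Proof.
move=> h; apply/eqP; rewrite -leqn0; apply/bigmax_leqP => j /asboolP hj.
have := ltn_ord j; rewrite /tent => hj2.
case: (posnP j) => [->|jp]; first by rewrite min0n.
case: (ltngtP j k.*2) => hjk; [by case: (h j _ hj); lia|lia|].
by rewrite hjk subnn minn0.
Qed.

Lemma bumps_bounded_eventually0 w n :
  (forall k, (n <= k)%N -> bump k w = 0%N) -> bumps_bounded w.
Proof.
move=> h; exists (bump_max n w) => M; apply/bigmax_leqP => k _.
have [hk|hk] := ltnP k n; first exact: (leq_bigmax (Ordinal hk)).
by rewrite h.
Qed.

End tents.

Section measurable_tents.
Context d (Om : measurableType d) (T : Om -> Om) (A : nat -> set Om).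
Hypothesis mT : measurable_fun setT T.
Hypothesis mA : forall k, measurable (A k).

Lemma measurable_bump_max_le M v : measurable [set w | (bump_max T A M w <= v)%N].
Proof.
have -> : [set w | (bump_max T A M w <= v)%N] =
  \bigcap_(k in [set k | (k < M)%N])
   \bigcap_(j in [set j | (j <= k.*2)%N /\ ~~ (tent k j <= v)%N])
      ~` (iter j T @^-1` A k).
  apply/seteqP; split => w /=.
    move/bigmax_leqP => h k hk j [hj hv] hA.
    have hj' : (j < (k.*2).+1)%N by lia.
    have h2 : (tent k j <= bump T A k w)%N.
      apply: (@leq_bigmax_cond _ _ (fun j : 'I_(k.*2).+1 => tent k j) (Ordinal hj')).
      by apply/asboolP.
    by rewrite (leq_trans h2 (h (Ordinal hk) isT)) in hv.
  move=> h; apply/bigmax_leqP => k _; apply/bigmax_leqP => j /asboolP hA.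
  rewrite leqNgt; apply/negP => hlt.
  have := ltn_ord j; rewrite ltnS => hj.
  by apply: (h k (ltn_ord k) j); [split => //; rewrite -ltnNge|].
apply: bigcap_measurableType => k _; apply: bigcap_measurableType => j _.
exact/measurableC/(measurable_preimage_iter mT).
Qed.

Let measurable_bumps_le v :
  measurable [set w | forall M, (bump_max T A M w <= v)%N].
Proof.
rewrite (_ : [set w | _] = \bigcap_M [set w | (bump_max T A M w <= v)%N]).
  by apply: bigcapT_measurable => M; exact: measurable_bump_max_le.
by apply/seteqP; split => [w h M _|w h M]; [exact: h| exact: h M I].
Qed.

Lemma measurable_bump_sup : measurable_fun setT (bump_sup T A).
Proof.
have mb : measurable (bumps_bounded T A).
  rewrite (_ : bumps_bounded T A = \bigcup_v [set w | forall M, (bump_max T A M w <= v)%N]).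
    by apply: bigcupT_measurable => v; exact: measurable_bumps_le.
  by apply/seteqP; split => [w [v h]|w [v _ h]]; exists v.
apply: measurable_fun_nat_le => v.
rewrite (_ : [set w | _] =
   [set w | forall M, (bump_max T A M w <= v)%N] `|` ~` bumps_bounded T A).
  by apply: measurableU; [exact: measurable_bumps_le|exact: measurableC].
apply/seteqP; split => w /=.
  move=> h; have [hb|hb] := pselect (bumps_bounded T A w); last by right.
  by left; apply/(bump_supP hb).
case=> [h|hb]; last by rewrite /bump_sup; case: pselect.
have hb : bumps_bounded T A w by exists v.
by apply/(bump_supP hb).
Qed.

End measurable_tents.

Lemma rat_interval_separates (R : realType) (r : R) (s : seq R) : r \notin s ->
  exists a b : rat, (ratr a < r < ratr b)%R /\
    forall y, y \in s -> ~~ (ratr a < y < ratr b)%R.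
Proof.
have ratP (x y : R) : (x < y)%R -> exists q : rat, (x < ratr q < y)%R.
  by move=> xy; have [q] := rat_in_itvoo xy; rewrite in_itv /=; exists q.
elim: s => [_|y s IH].
  have [a /andP [_ ha]] := ratP (r - 1)%R r ltac:(lra).
  have [b /andP [hb _]] := ratP r (r + 1)%R ltac:(lra).
  by exists a, b; split => //; apply/andP.
rewrite in_cons negb_or => /andP [ry rs].
have [a [b [hab hs]]] := IH rs.
case/boolP: (ratr a < y < ratr b)%R => hy; last first.
  by exists a, b; split => // z; rewrite in_cons => /orP [/eqP -> //|]; exact: hs.
move/andP: hab => [har hrb]; move/andP: hy => [hay hyb].
have [hlt|hgt] : (y < r)%R \/ (r < y)%R.
  by move: ry; rewrite neq_lt => /orP [h|h]; [right|left].
- have [q /andP [hq1 hq2]] := ratP _ _ hlt.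
  exists q, b; split; first by apply/andP.
  move=> z; rewrite in_cons => /orP [/eqP ->|hz]; first by apply/negP => /andP [h1 _]; lra.
  apply/negP => /andP [h1 h2]; move/negP: (hs z hz); apply; apply/andP; split; lra.
- have [q /andP [hq1 hq2]] := ratP _ _ hgt.
  exists a, q; split; first by apply/andP.
  move=> z; rewrite in_cons => /orP [/eqP ->|hz]; first by apply/negP => /andP [_ h2]; lra.
  apply/negP => /andP [h1 h2]; move/negP: (hs z hz); apply; apply/andP; split; lra.
Qed.

Lemma separating_family d (Om : measurableType d) (R : realType)
    (mu : probability Om R) (T : Om -> Om) :
  lebesgue_probability_space mu -> non_periodic mu T ->
  exists (S : nat -> set Om) (N : set Om),
    [/\ (forall j, measurable (S j)), measurable N, mu N = 0%E &
    forall x, ~ N x -> forall n, exists j,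
      S j x /\ forall m, (0 < m <= n)%N -> ~ S j (iter m T x)].
Proof.
move=> [Om0 [B [phi [nu [[mO0 muO0 _ _] [[_ phi_inj _] mphi _ _]]]]]].
move=> [[_ mT Tpres] [Per [mPer Per0 hPer]]].
pose S j := if @unpickle (rat * rat)%type j is Some ab
  then Om0 `&` phi @^-1` `]ratr ab.1, ratr ab.2[ else set0.
pose N := (\bigcup_m iter m T @^-1` (~` Om0)) `|` Per.
have mN : measurable N.
  apply: measurableU => //; apply: bigcupT_measurable => m.
  exact: (measurable_preimage_iter mT m (measurableC mO0)).
exists S, N; split => //.
- move=> j; rewrite /S; case: unpickle => [[a b]|] //=.
  exact: mphi (measurable_itv _).
- apply: (measure_negligible mN); apply: negligibleU; last by exists Per; split.
  apply: negligible_bigcup => m; apply/negligibleP.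
    exact: (measurable_preimage_iter mT m (measurableC mO0)).
  apply: etrans (measure_preimage_iter mT Tpres m (measurableC mO0)) _.
  by rewrite probability_setC // muO0 subee.
- move=> x Nx n.
  have Om0_iter m : Om0 (iter m T x).
    by apply: contrapT => h; apply: Nx; left; exists m.
  have aperiodic i : (0 < i)%N -> iter i T x <> x.
    by move=> i0 hi; apply: Nx; right; apply: hPer; exists i.
  have [a [b [hab hsep]]] : exists a b : rat, (ratr a < phi x < ratr b)%R /\
      forall y, y \in [seq phi (iter m T x) | m <- iota 1 n] ->
      ~~ (ratr a < y < ratr b)%R.
    apply: rat_interval_separates; apply/mapP => -[m hm he].
    rewrite mem_iota in hm; apply: (aperiodic m); first lia.
    by apply: phi_inj; rewrite ?inE //; exact: (Om0_iter 0%N).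
  exists (pickle (a, b)); rewrite /S pickleK /=; split.
    by split; [exact: (Om0_iter 0%N)|rewrite /= in_itv /=].
  move=> m hm [_]; rewrite /= in_itv /=; apply/negP.
  by apply: hsep; apply/mapP; exists m => //; rewrite mem_iota; lia.
Qed.

Lemma measure_uncovered_small d (Om : measurableType d) (R : realType)
    (mu : probability Om R) (U : nat -> set Om) (N : set Om) (e : R) :
  (forall j, measurable (U j)) -> measurable N -> mu N = 0%E ->
  (forall x, ~ N x -> exists j, U j x) -> (0 < e)%R ->
  exists K, (mu (uncovered U K) <= e%:E)%E.
Proof.
move=> mU mN N0 UN e0.
have mB K := measurable_uncovered K mU.
have mcap : measurable (\bigcap_K uncovered U K) by exact: bigcapT_measurable.
have cap0 : mu (\bigcap_K uncovered U K) = 0%E.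
  apply/eqP; rewrite -measure_le0 -N0; apply: le_measure; rewrite ?inE //.
  move=> x hx; apply: contrapT => /UN [j hj].
  exact: (hx j I j (leqnn j) hj).
have decr : nonincreasing_seq (uncovered U).
  by move=> n m nm; apply/subsetPset => x hx j hj; apply: hx; lia.
have fin0 : (mu (uncovered U 0) < +oo)%E.
  exact: le_lt_trans (probability_le1 mu (mB 0%N)) (ltry _).
have : (mu \o uncovered U) @ \oo --> (0%R)%:E.
  have -> : (0%R)%:E = mu (\bigcap_K uncovered U K) by rewrite cap0.
  exact: nonincreasing_cvg_mu.
move=> /fine_cvgP [_ /cvgr_lt /(_ e e0) [K _ hK]].
exists K; rewrite -(fineK (fin_num_measure mu _ (mB K))) lee_fin.
exact/ltW/(hK K (leqnn K)).
Qed.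

Section markers.
Context d (Om : measurableType d) (R : realType) (mu : probability Om R).
Context (T : Om -> Om) (S : nat -> set Om) (N : set Om).
Hypothesis mT : measurable_fun setT T.
Hypothesis Tpres : forall A, measurable A -> mu (T @^-1` A) = mu A.
Hypotheses (mS : forall j, measurable (S j)) (mN : measurable N) (N0 : mu N = 0%E).
Hypothesis S_separates : forall x, ~ N x -> forall n, exists j,
  S j x /\ forall m, (0 < m <= n)%N -> ~ S j (iter m T x).

Lemma marker (e : R) : (0 < e)%R -> exists (A : set Om) (L : nat),
  [/\ measurable A, (mu A <= e%:E)%E &
      forall w s, exists t, [/\ (s < t)%N, (t <= s + L)%N & A (iter t T w)]].
Proof.
move=> e0; have e20 : (0 < e / 2)%R by rewrite divr_gt0.
have [c] := ltr_add_invr e20; rewrite add0r => /ltW hc.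
pose U j := S j `&` [set x | forall m, (0 < m <= c)%N -> ~ S j (iter m T x)].
have mU j : measurable (U j).
  rewrite (_ : U j = S j `&` \bigcap_(m in [set m | (0 < m <= c)%N])
      ~` (iter m T @^-1` S j)).
    apply: measurableI => //; apply: bigcap_measurableType => m _.
    exact/measurableC/(measurable_preimage_iter mT).
  by apply/seteqP; split => x [h1 h2]; split => // m hm; exact: h2.
have discU j x m : (0 < m <= c)%N -> U j x -> ~ U j (iter m T x).
  by move=> hm [_ h] [h' _]; exact: h hm h'.
have [K hK] : exists K, (mu (uncovered U K) <= (e / 2)%:E)%E.
  apply: measure_uncovered_small mU mN N0 _ e20 => x /S_separates /(_ c).
  by case=> j hj; exists j.
exists (colour_peak T c U K), (K.+1 * c).*2.+1; split.
- exact: (measurable_colour_peak c K mT mU).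
- apply: le_trans (measure_colour_peak K discU mT Tpres mU) _.
  by rewrite (splitr e) EFinD leeD // lee_fin.
- exact: colour_peak_syndetic.
Qed.

Lemma marker_sequence (eps : nat -> R) : (forall k, 0 < eps k)%R ->
  exists (A : nat -> set Om) (L : nat -> nat),
  [/\ forall k, measurable (A k), forall k, (mu (A k) <= (eps k)%:E)%E &
      forall k w s, exists t, [/\ (s < t)%N, (t <= s + L k)%N & A k (iter t T w)]].
Proof.
move=> eps0.
have hAL k : exists AL : set Om * nat,
  [/\ measurable AL.1, (mu AL.1 <= (eps k)%:E)%E &
      forall w s, exists t, [/\ (s < t)%N, (t <= s + AL.2)%N & AL.1 (iter t T w)]].
  by have [A [L h]] := marker (eps0 k); exists (A, L).
have [AL {}hAL] := choice hAL.
by exists (fun k => (AL k).1), (fun k => (AL k).2); split => k; have [] := hAL k.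
Qed.

End markers.

Lemma mulrn_divSn_le (R : numFieldType) (a : R) (n : nat) :
  (0 <= a)%R -> ((a / n.+1%:R) *+ n <= a)%R.
Proof.
move=> a0; rewrite -mulr_natr -mulrA; apply: ler_piMr => //.
by rewrite mulrC ler_pdivrMr // mul1r ler_nat.
Qed.

Section tents_vanish.
Context d (Om : measurableType d) (R : realType) (mu : probability Om R).
Context (T : Om -> Om) (A : nat -> set Om).
Hypothesis mT : measurable_fun setT T.
Hypothesis Tpres : forall A, measurable A -> mu (T @^-1` A) = mu A.
Hypothesis mA : forall k, measurable (A k).
Hypothesis muA : forall k,
  (mu (A k) <= ((1 / (2 ^ k.+1)%:R) / (k.*2.+1)%:R)%:E)%E.

Let visits k := \big[setU/set0]_(j < k.*2) (iter j T @^-1` A k).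

Let measurable_visits k : measurable (visits k).
Proof. by apply: bigsetU_measurable => j _; exact: measurable_preimage_iter. Qed.

Let measure_visits k : (mu (visits k) <= (1 / (2 ^ k.+1)%:R)%:E)%E.
Proof.
apply: le_trans (Boole_inequality mu (A := fun j => iter j T @^-1` A k) _) _.
  by move=> j _; exact: measurable_preimage_iter.
apply: (@le_trans _ _ (\sum_(i < k.*2) ((1 / (2 ^ k.+1)%:R) / (k.*2.+1)%:R)%:E)%E).
  apply: lee_sum => i _.
  by have := muA k; rewrite -(measure_preimage_iter mT Tpres i (mA k)).
rewrite sumEFin sumr_const card_ord lee_fin.
by apply: mulrn_divSn_le; rewrite divr_ge0.
Qed.

Let visits_infinitely_often_null : mu (lim_sup_set visits) = 0%E.
Proof.
apply: lim_sup_set_cvg0 measurable_visits _.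
apply: le_lt_trans _ (ltry 1%R).
apply: le_trans _ (epsilon_trick0 xpredT ler01).
by apply: lee_nneseries => // n _; exact: measure_visits.
Qed.

Lemma bumps_bounded_along_orbit_ae :
  mu.-negligible (~` [set w | forall p, bumps_bounded T A (iter p T w)]).
Proof.
have bounded_off x : ~ lim_sup_set visits x -> bumps_bounded T A x.
  move=> hx; have [n hn] :
      exists n, ~ (\bigcup_(j in [set j | (n <= j)%N]) visits j) x.
    apply: contrapT => h; apply: hx => n _; apply: contrapT => h'.
    by apply: h; exists n.
  apply: (@bumps_bounded_eventually0 _ _ _ _ n) => k hk.
  apply: bump_eq0 => j hj hAj; apply: hn; exists k => //.
  rewrite /visits -(bigcup_mkord _ (fun j => iter j T @^-1` A k)).
  by exists j => //=; lia.
have mLS : measurable (lim_sup_set visits).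
  by apply: bigcapT_measurable => n; apply: bigcup_measurable => j _.
apply: (negligibleS (A := \bigcup_p (iter p T @^-1` lim_sup_set visits))).
  move=> w /= hw; apply: contrapT => h; apply: hw => p.
  by apply: bounded_off => hp; apply: h; exists p.
apply: negligible_bigcup => p; apply/negligibleP.
  exact: (measurable_preimage_iter mT p mLS).
exact: etrans (measure_preimage_iter mT Tpres p mLS) visits_infinitely_often_null.
Qed.

End tents_vanish.

Theorem mainTheorem8 (d : measure_display) (Om : measurableType d)
    (R : realType) (mu : probability Om R) (T : Om -> Om) :
  lebesgue_probability_space mu -> non_periodic mu T ->
  exists (f : Om -> nat) (g : nat -> nat),
    measurable_fun setT f /\
    {ae mu, forall w,
      ((f (T w) <= (f w).+1)%N /\ (f w <= (f (T w)).+1)%N) /\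
      (forall i : nat, exists k : nat,
          [/\ (1 <= k)%N, (k <= g i)%N & (i < f (iter k T w))%N])}.
Proof.
move=> std nonper; have [[_ mT Tpres] _] := nonper.
have [S [N [mS mN N0 S_separates]]] := separating_family std nonper.
pose eps k : R := ((1 / (2 ^ k.+1)%:R) / (k.*2.+1)%:R)%R.
have eps_gt0 k : (0 < eps k)%R by rewrite !divr_gt0 // ltr0n expn_gt0.
have [A [L [mA muA visits]]] :=
  marker_sequence mT Tpres mS mN N0 S_separates eps_gt0.
exists (bump_sup T A), (fun i => L i.+1); split.
  exact: (measurable_bump_sup mT mA).
apply: negligibleS (bumps_bounded_along_orbit_ae mT Tpres mA muA) => w hw bounded.
apply: hw; split; first exact: (bump_sup_lipschitz (bounded 0%N) (bounded 1%N)).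
move=> i; have [t [ht1 ht2 hAt]] := visits i.+1 w i.+1.
exists (t - i.+1)%N; split; [lia|lia|].
apply: bump_sup_ge; first exact: bounded.
by rewrite -iterD subnKC // ltnW.
Qed.
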